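(* Let $n\ge2$ and let $T_n(t)=\sum_{m=1}^n(a_m\cos mt+b_m\sin mt)$ with $a_m,b_m\in\mathbb{R}$. For $\nu\in\{1,\dots,n\}$, let $t_1,\dots,t_{2n+1}\in[0,2\pi)$ be the arguments of the $2n+1$ roots of the polynomial $s_n(z)+z^{2n+1}s_n(1/z)$, where $s_n(z)=\sum_{j=0}^{\lfloor n/\nu\rfloor}\frac{(-z^\nu)^j}{\nu^jj!}$. Then \[a_\nu=\sum_{k=1}^{2n+1}T_n(-t_k),\qquad b_\nu=\sum_{k=1}^{2n+1}T_n\!\left(\frac{\pi}{2\nu}-t_k\right),\qquad\nu=1,\dots,n.\] *)

From mathcomp Require Import all_boot all_order all_algebra.
From mathcomp Require Import reals trigo.
Import GRing.Theory Num.Theory Order.TTheory.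
From mathcomp Require Export complex.

Set Implicit Arguments.
Unset Strict Implicit.
Unset Printing Implicit Defensive.

Local Open Scope ring_scope.
Local Open Scope complex_scope.

Definition trigpoly (R : realType) (n : nat) (a b : nat -> R) (t : R) : R :=
  \sum_(1 <= m < n.+1) (a m * cos (m%:R * t) + b m * sin (m%:R * t)).

Definition s_poly (R : realType) (n nu : nat) : {poly R[i]} :=
  \sum_(j < (n %/ nu).+1)
     ((- 'X^nu) ^+ j * ((nu%:R ^+ j * (j`!)%:R)^-1 : R[i])%:P).

(* z^d p(1/z), as a polynomial (valid when deg p <= d):
   sum_i p_i z^(d - i) *)
Definition recip_poly (R : realType) (d : nat) (p : {poly R[i]}) : {poly R[i]} :=
  \sum_(i < size p) p`_i *: 'X^(d - i).

Definition key_poly (R : realType) (n nu : nat) : {poly R[i]} :=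
  s_poly R n nu + recip_poly (2 * n).+1 (s_poly R n nu).

(* Write z_k = e^(i t_k) and p_m = sum_k z_k^m.  Expanding cos and sin of
   m (c - t_k), the sum over k of T_n(c - t_k) only involves p_1, ..., p_n, and it
   equals a_nu cos(nu c) + b_nu sin(nu c) as soon as p_m = [m = nu] for
   1 <= m <= n; the choices c = 0 and c = pi / (2 nu) give the two formulas.

   The roots lie on the unit circle: in the variable -z^nu the coefficients of s_n
   are positive and decreasing, so by Enestrom-Kakeya s_n has no zero in the open
   unit disk.  As s_n has real coefficients and degree < 2n+1, factoring it shows
   |z^(2n+1) s_n(1/z)| < |s_n(z)| for 0 < |z| < 1, so the key polynomial has no
   zero in the punctured disk, nor, by its symmetry under z -> 1/z, outside it.

   The power sums: Q = prod_k (1 - z_k X) is the reversal of the key polynomial,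
   whose n+1 top coefficients are those of s_n, so Q = s_n mod X^(n+1).  Newton's
   identities say X Q' + Q P = 0 mod X^(n+1) with P = sum_(m <= n) p_m X^m, and
   X s_n' + X^nu s_n = 0 mod X^(n+1); hence s_n (P - X^nu) = 0 mod X^(n+1), and
   P = X^nu mod X^(n+1) because s_n(0) = 1. *)

From mathcomp Require Import all_boot all_order all_algebra.
From mathcomp Require Import reals trigo.
Import GRing.Theory Num.Theory Order.TTheory.
From mathcomp Require Import complex.
From mathcomp Require Import ring zify.

Set Implicit Arguments.
Unset Strict Implicit.
Unset Printing Implicit Defensive.

Local Open Scope ring_scope.

Section EnestromKakeya.
Variables (F : numDomainType) (a : nat -> F).

Definition abel_tail (y : F) N := \sum_(j < N) (a j - a j.+1) * y ^+ j.+1.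

Lemma abel_summation y N :
  (1 - y) * \sum_(j < N.+1) a j * y ^+ j = a 0 - abel_tail y N - a N * y ^+ N.+1.
Proof.
elim: N => [|N IH]; first by rewrite big_ord1 /abel_tail big_ord0; ring.
by rewrite big_ord_recr mulrDr IH /abel_tail big_ord_recr /= !exprS; ring.
Qed.

Hypothesis a_noninc : forall j, 0 <= a j.+1 <= a j.

Lemma norm_abel_tail_le y N :
  `|y| <= 1 -> `|abel_tail y N| <= `|y| * (a 0 - a N).
Proof.
move=> y_le1; elim: N => [|N IH]; first by rewrite /abel_tail big_ord0 normr0 subrr mulr0.
rewrite /abel_tail big_ord_recr /= -/(abel_tail y N).
apply: le_trans (ler_normD _ _) _.
have [_ aSN_le] := andP (a_noninc N).
have -> : `|y| * (a 0 - a N.+1) = `|y| * (a 0 - a N) + (a N - a N.+1) * `|y| by ring.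
rewrite lerD // normrM ger0_norm ?subr_ge0 // ler_wpM2l ?subr_ge0 //.
by rewrite normrX exprS ler_piMr ?exprn_ile1.
Qed.

Theorem enestrom_kakeya y N : 0 < a 0 -> `|y| < 1 -> \sum_(j < N.+1) a j * y ^+ j != 0.
Proof.
move=> a0_gt0 y_lt1; have y_le1 := ltW y_lt1.
have aN_ge0 : 0 <= a N by case: N => [|N]; [exact: ltW | case/andP: (a_noninc N)].
apply/eqP => sum0; have := abel_summation y N.
rewrite sum0 mulr0 => /eqP; rewrite eq_sym subr_eq0 => /eqP a0E.
have : `|a 0| <= `|y| * a 0.
  rewrite -[X in `|X|](subrK (abel_tail y N)) a0E addrC.
  apply: le_trans (ler_normD _ _) _.
  have -> : `|y| * a 0 = `|y| * (a 0 - a N) + a N * `|y| by ring.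
  rewrite lerD ?norm_abel_tail_le // normrM ger0_norm // ler_wpM2l //.
  by rewrite normrX exprS ler_piMr ?exprn_ile1.
by rewrite gtr0_norm // ler_pMl // => /(lt_le_trans y_lt1); rewrite ltxx.
Qed.
End EnestromKakeya.

Section UnitCircleRoots.
Variable C : numClosedFieldType.

Lemma norm_sub_reflect_le (z w : C) : z != 0 -> `|z| <= 1 -> 1 <= `|w| ->
  `|z| * `|(z^*)^-1 - w| <= `|z - w|.
Proof.
move=> z0 z_le1 w_ge1.
have -> : `|z| * `|(z^*)^-1 - w| = `|1 - z^* * w|.
  by rewrite -norm_conjC -normrM mulrBr divff ?conjC_eq0.
have lagrange : (z - w) * (z - w)^* =
    (1 - z^* * w) * (1 - z^* * w)^* + (1 - z * z^*) * (w * w^* - 1).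
  by rewrite !rmorphB rmorphM rmorph1 /= conjCK; ring.
rewrite -(ler_pXn2r (_ : 0 < 2)%N) ?nnegrE // !normCK lagrange lerDl -!normCK.
by rewrite mulr_ge0 // subr_ge0 ?exprn_ile1 ?exprn_ege1.
Qed.

Lemma norm_prod_sub_reflect_le (r : seq C) (z : C) : z != 0 -> `|z| <= 1 ->
  (forall w, w \in r -> 1 <= `|w|) ->
  `|z| ^+ size r * `|\prod_(w <- r) ((z^*)^-1 - w)| <= `|\prod_(w <- r) (z - w)|.
Proof.
move=> z0 z_le1; elim: r => [|w r IH] r_ge1; first by rewrite !big_nil expr0 mul1r.
rewrite !big_cons !normrM exprS mulrACA.
apply: ler_pM; rewrite ?mulr_ge0 ?exprn_ge0 //.
  by apply: norm_sub_reflect_le => //; apply: r_ge1; rewrite mem_head.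
by apply: IH => v vr; apply: r_ge1; rewrite in_cons vr orbT.
Qed.

Variable s : {poly C}.
Hypothesis s_neq0_disk : forall u, `|u| < 1 -> s.[u] != 0.
Hypothesis s_real : forall u, s.[u^*] = (s.[u])^*.

Lemma poly_neq0_disk : s != 0.
Proof.
have := @s_neq0_disk 0; rewrite normr0 ltr01 => /(_ isT).
by apply: contraNneq => ->; rewrite horner0.
Qed.

Lemma norm_horner_reflect_le u : u != 0 -> `|u| <= 1 ->
  `|u| ^+ (size s).-1 * `|s.[(u^*)^-1]| <= `|s.[u]|.
Proof.
move=> u0 u_le1.
have [r sE] := closed_field_poly_normal s.
have sizeE : (size s).-1 = size r.
  by rewrite [in LHS]sE size_scale ?lead_coef_eq0 ?poly_neq0_disk // size_prod_XsubC.
have r_ge1 w : w \in r -> 1 <= `|w|.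
  move=> wr; rewrite real_leNgt ?real1 ?normr_real //; apply/negP => /s_neq0_disk.
  by rewrite sE hornerZ (rootP _) ?mulr0 ?eqxx // root_prod_XsubC.
have sv v : s.[v] = lead_coef s * \prod_(w <- r) (v - w).
  by rewrite [in LHS]sE hornerZ horner_prod; under eq_bigr do rewrite hornerXsubC.
rewrite !sv !normrM mulrCA sizeE ler_wpM2l //.
exact: norm_prod_sub_reflect_le.
Qed.

Lemma norm_reciprocal_lt D u : (size s <= D)%N -> u != 0 -> `|u| < 1 ->
  `|u ^+ D * s.[u^-1]| < `|s.[u]|.
Proof.
move=> sD u0 u_lt1.
have su_gt0 : 0 < `|s.[u]| by rewrite normr_gt0 s_neq0_disk.
have reflectE : `|s.[u^-1]| = `|s.[(u^*)^-1]| by rewrite -fmorphV s_real norm_conjC.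
have -> : D = (D - (size s).-1 + (size s).-1)%N by rewrite subnK //; lia.
rewrite normrM reflectE normrX exprD -mulrA.
apply: le_lt_trans (_ : _ <= `|u| ^+ (D - (size s).-1) * `|s.[u]|) _.
  by rewrite ler_wpM2l ?exprn_ge0 //; apply: norm_horner_reflect_le u0 (ltW u_lt1).
have := poly_neq0_disk; rewrite -size_poly_gt0 => s_gt0.
by rewrite gtr_pMl // exprn_ilt1 // subn_eq0 -ltnNge; lia.
Qed.

Theorem norm_root_add_reciprocal (q : {poly C}) D z : (size s <= D)%N ->
  (forall u, u != 0 -> q.[u] = u ^+ D * s.[u^-1]) ->
  z != 0 -> root (s + q) z -> `|z| = 1.
Proof.
move=> sD qE z0 /rootP; rewrite hornerD.
have no_root_disk u : u != 0 -> `|u| < 1 -> s.[u] + q.[u] != 0.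
  move=> u0 u_lt1; rewrite addr_eq0.
  apply/eqP => sE; have := norm_reciprocal_lt sD u0 u_lt1.
  by rewrite -qE // sE normrN ltxx.
case: (real_ltgtP (normr_real z) (real1 C)) => // [z_lt1|z_gt1] root_z.
  by move: (no_root_disk z z0 z_lt1); rewrite root_z eqxx.
have zV0 : z^-1 != 0 by rewrite invr_eq0.
have := no_root_disk _ zV0; rewrite normrV ?unitfE // invf_lt1 ?(lt_trans ltr01) //.
have -> : s.[z^-1] + q.[z^-1] = z^-1 ^+ D * (s.[z] + q.[z]).
  by rewrite !qE // invrK mulrDr mulrA -exprMn mulVf // expr1n mul1r addrC.
by rewrite root_z mulr0 eqxx => /(_ z_gt1).
Qed.

End UnitCircleRoots.

Section NewtonIdentities.
Variable R : comNzRingType.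
Implicit Types (L : seq R) (w : R).

Lemma coef_prod_1subZX L i :
  (\prod_(w <- L) (1 - w *: 'X))`_i =
  if (i <= size L)%N then (\prod_(w <- L) ('X - w%:P))`_(size L - i) else 0.
Proof.
elim: L i => [|w L IH] i; first by rewrite !big_nil /= !coef1; case: i.
rewrite !big_cons /= mulrBl mul1r coefB -scalerAl coefZ coefXM.
rewrite mulrBl coefB coefXM coefCM !IH.
have sizeP : size (\prod_(v <- L) ('X - v%:P)) = (size L).+1 by rewrite size_prod_XsubC.
case: i => [|i] /=.
  by rewrite !subn0 [_`_(size L).+1]nth_default ?sizeP.
rewrite ltnS subSS.
case: (ltngtP i (size L)) => [i_lt|_|->]; rewrite ?subnn ?mulr0 ?subr0 //.
by rewrite (_ : size L - i = (size L - i.+1).+1)%N //; lia.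
Qed.

Definition powers_poly n w : {poly R} := \sum_(1 <= m < n.+1) w ^+ m *: 'X^m.

Lemma coef_powers_poly n w m : (0 < m <= n)%N -> (powers_poly n w)`_m = w ^+ m.
Proof.
move=> m_range; rewrite /powers_poly coef_sum.
under eq_bigr do rewrite coefZ coefXn eq_sym mulr_natr mulrb.
by rewrite -big_mkcond big_nat1_eq ltnS m_range.
Qed.

Lemma mul_1subZX_powers_poly n w :
  (1 - w *: 'X) * powers_poly n w = w *: 'X - w ^+ n.+1 *: 'X^(n.+1).
Proof.
elim: n => [|n IH]; first by rewrite /powers_poly big_geq // mulr0 expr1 subrr.
rewrite /powers_poly big_nat_recr //= mulrDr -/(powers_poly n w) IH.
by rewrite -!mul_polyC [w ^+ n.+2]exprS ['X^(n.+2)]exprS polyCM; ring.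
Qed.

Lemma newton_identities L n i : (i <= n)%N ->
  ('X * (\prod_(w <- L) (1 - w *: 'X))^`() +
   (\prod_(w <- L) (1 - w *: 'X)) * \sum_(w <- L) powers_poly n w)`_i = 0.
Proof.
elim: L i => [|w L IH] i i_le; first by rewrite !big_nil derivC mulr0 mul1r add0r coef0.
rewrite !big_cons.
set Q := \prod_(_ <- _) _; set S := \sum_(_ <- _) _.
have -> : 'X * ((1 - w *: 'X) * Q)^`() + (1 - w *: 'X) * Q * (powers_poly n w + S) =
    (1 - w *: 'X) * ('X * Q^`() + Q * S) - w ^+ n.+1 *: ('X^(n.+1) * Q).
  rewrite derivM; have -> : (1 - w *: 'X)^`() = - w%:P.
    by rewrite derivB derivC derivZ derivX sub0r alg_polyC.
  have -> : (1 - w *: 'X) * Q * (powers_poly n w + S) =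
      (1 - w *: 'X) * Q * S + Q * ((1 - w *: 'X) * powers_poly n w) by ring.
  by rewrite mul_1subZX_powers_poly -!mul_polyC; ring.
rewrite coefB coefZ coefXnM ltnS i_le mulr0 subr0 coefM big1 // => j _.
by rewrite IH ?mulr0 // (leq_trans (leq_subr _ _)).
Qed.

Theorem power_sums_of_truncated_ode (L : seq R) (s : {poly R}) n nu :
  s`_0 = 1 ->
  (forall i, (i <= n)%N -> ('X * s^`() + s * 'X^nu)`_i = 0) ->
  (forall i, (i <= n)%N -> (\prod_(w <- L) (1 - w *: 'X))`_i = s`_i) ->
  forall m, (0 < m <= n)%N -> \sum_(w <- L) w ^+ m = (m == nu)%:R.
Proof.
move=> s0 s_ode Q_s.
set Q := \prod_(_ <- _) _ in Q_s; set S := \sum_(w <- L) powers_poly n w.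
have sS_ode i : (i <= n)%N -> (s * (S - 'X^nu))`_i = 0.
  move=> i_le; have := newton_identities L i_le; rewrite -/Q -/S.
  have XQ'E : ('X * Q^`())`_i = ('X * s^`())`_i.
    by rewrite !coefXM; case: i i_le => [|i] i_le //=; rewrite !coef_deriv Q_s.
  have QSE : (Q * S)`_i = (s * S)`_i.
    by rewrite !coefM; apply: eq_bigr => j _; rewrite Q_s // -ltnS (leq_trans (ltn_ord j)).
  move/eqP; rewrite coefD XQ'E QSE addr_eq0 => /eqP XsE.
  have := s_ode i i_le; rewrite coefD XsE => sXE.
  by apply/eqP; rewrite mulrBr coefB -oppr_eq0 opprB addrC sXE.
have S_trunc i : (i <= n)%N -> (S - 'X^nu)`_i = 0.
  elim/ltn_ind: i => i IH i_le; have := sS_ode i i_le.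
  rewrite coefMr big_ord_recr /= subnn s0 mul1r big1 ?add0r // => j _.
  by rewrite IH ?mulr0 // (leq_trans (ltnW (ltn_ord j))).
move=> m m_range; have := S_trunc m; rewrite coefB coefXn /S coef_sum.
under eq_bigr do rewrite coef_powers_poly //.
by move=> h; apply/eqP; rewrite -subr_eq0 h //; case/andP: m_range.
Qed.

End NewtonIdentities.

Lemma mulX_derivXn (S : nzRingType) k : 'X * ('X^k)^`() = k%:R *: ('X^k : {poly S}).
Proof.
case: k => [|k]; first by rewrite derivXn mulr0n mulr0 scale0r.
by rewrite derivXn mulrnAr -exprS scaler_nat.
Qed.

Section SPoly.
Variable R : realType.
Local Notation C := R[i].

Definition s_weight (nu j : nat) : C := ((nu ^ j * j`!)%:R)^-1.

Lemma s_polyE n nu :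
  s_poly R n nu = \sum_(j < (n %/ nu).+1) ((-1) ^+ j * s_weight nu j) *: 'X^(nu * j).
Proof.
apply: eq_bigr => j _; rewrite /s_weight natrM natrX.
by rewrite -mul_polyC polyCM rmorphXn rmorphN1 exprM exprNn; ring.
Qed.

Lemma horner_s_poly n nu u :
  (s_poly R n nu).[u] = \sum_(j < (n %/ nu).+1) s_weight nu j * (- u ^+ nu) ^+ j.
Proof.
rewrite s_polyE horner_sum; apply: eq_bigr => j _.
by rewrite hornerZ hornerXn exprM [in RHS]exprNn mulrA [_ * (-1) ^+ j]mulrC.
Qed.

Lemma s_poly_conj n nu u : (s_poly R n nu).[u^*] = ((s_poly R n nu).[u])^*.
Proof.
rewrite !horner_s_poly rmorph_sum; apply: eq_bigr => j _.
by rewrite rmorphM rmorphXn rmorphN rmorphXn fmorphV rmorph_nat.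
Qed.

Lemma s_poly_neq0_disk n nu u : (0 < nu)%N -> `|u| < 1 -> (s_poly R n nu).[u] != 0.
Proof.
move=> nu_gt0 u_lt1; rewrite horner_s_poly; apply: enestrom_kakeya.
- move=> j; rewrite /s_weight invr_ge0 ler0n /=.
  rewrite lef_pV2 ?posrE ?ltr0n ?muln_gt0 ?expn_gt0 ?nu_gt0 ?fact_gt0 // ler_nat.
  by rewrite expnS factS leq_mul ?leq_pmull.
- by rewrite /s_weight expn0 fact0 invr_gt0 ltr0n.
- by rewrite normrN normrX exprn_ilt1 // -lt0n.
Qed.

Lemma coef_s_poly_gt n nu k : (0 < nu)%N -> (n < k)%N -> (s_poly R n nu)`_k = 0.
Proof.
move=> nu_gt0 n_lt_k; rewrite s_polyE coef_sum big1 // => j _.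
rewrite coefZ coefXn; case: eqP => [kE|]; last by rewrite mulr0.
have : (nu * j <= n)%N.
  by rewrite mulnC -leq_divRL // -ltnS ltn_ord.
by rewrite -kE leqNgt n_lt_k.
Qed.

Lemma size_s_poly n nu : (0 < nu)%N -> (size (s_poly R n nu) <= n.+1)%N.
Proof. by move=> nu_gt0; apply/leq_sizeP => j; apply: coef_s_poly_gt. Qed.

Lemma coef0_s_poly n nu : (0 < nu)%N -> (s_poly R n nu)`_0 = 1.
Proof.
move=> nu_gt0; rewrite s_polyE coef_sum big_ord_recl big1 => [|j _].
  by rewrite coefZ muln0 coefXn mulr1 /s_weight expr0 mul1r fact0 invr1 addr0.
by rewrite coefZ coefXn eq_sym muln_eq0 /= eqn0Ngt nu_gt0 mulr0.
Qed.

Lemma s_weight_rec nu j : (0 < nu)%N ->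
  s_weight nu j.+1 * (nu * j.+1)%:R = s_weight nu j.
Proof.
move=> nu_gt0; rewrite /s_weight expnS factS mulnACA natrM invfM mulrAC.
by rewrite mulVf ?mul1r // pnatr_eq0 muln_eq0 negb_or -!lt0n nu_gt0.
Qed.

Lemma s_poly_ode n nu : (0 < nu)%N ->
  'X * (s_poly R n nu)^`() + s_poly R n nu * 'X^nu =
  ((-1) ^+ (n %/ nu) * s_weight nu (n %/ nu)) *: 'X^(nu * (n %/ nu).+1).
Proof.
move=> nu_gt0; rewrite s_polyE raddf_sum mulr_sumr mulr_suml big_ord_recl /=.
rewrite muln0 derivZ derivXn mulr0n scaler0 mulr0 add0r big_ord_recr /=.
rewrite addrA -big_split /= big1 ?add0r => [|j _].
  by rewrite -scalerAl -exprD mulnS addnC.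
rewrite derivZ -scalerAr -scalerAl mulX_derivXn -exprD /bump /= add1n -mulnSr.
rewrite scalerA -scalerDl.
by rewrite exprS mulN1r !mulNr -mulrA s_weight_rec // addNr scale0r.
Qed.

Lemma coef_recip_poly D (p : {poly C}) k : (size p <= D.+1)%N -> (k <= D)%N ->
  (recip_poly D p)`_k = p`_(D - k).
Proof.
move=> p_small k_le; rewrite /recip_poly coef_sum.
rewrite (eq_bigr (fun j : 'I_(size p) => if j == (D - k)%N :> nat then p`_j else 0)).
  rewrite -big_mkcond /= big_ord1_eq; case: ifP => // /negbT.
  by rewrite -leqNgt => p_short; rewrite nth_default.
move=> j _; rewrite coefZ coefXn.
have -> : (k == D - j)%N = (j == (D - k)%N :> nat) by apply/eqP/eqP; have := ltn_ord j; lia.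
by case: eqP; rewrite ?mulr1 ?mulr0.
Qed.

Lemma horner_recip_poly D (p : {poly C}) u : (size p <= D.+1)%N -> u != 0 ->
  (recip_poly D p).[u] = u ^+ D * p.[u^-1].
Proof.
move=> p_small u0; rewrite /recip_poly horner_sum (horner_coef p) mulr_sumr.
apply: eq_bigr => i _; rewrite hornerZ hornerXn exprVn mulrCA; congr (_ * _).
have i_le : (i <= D)%N by have := ltn_ord i; lia.
by rewrite -{2}(subnK i_le) exprD mulfK // expf_neq0.
Qed.

End SPoly.

Section PolarForm.
Variable R : realType.
Local Open Scope complex_scope.

Lemma norm_polar (r t : R) : 0 <= r -> `|(r * cos t) +i* (r * sin t)| = r%:C.
Proof.
by move=> r_ge0; rewrite normc_def /= !exprMn -mulrDr cos2Dsin2 mulr1 sqrtr_sqr ger0_norm.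
Qed.

Lemma cos_sin_exprn (t : R) m :
  (cos t +i* sin t) ^+ m = cos (m%:R * t) +i* sin (m%:R * t).
Proof.
elim: m => [|m IH]; first by rewrite expr0 mul0r cos0 sin0.
rewrite exprS IH -add1n natrD mulrDl mul1r cosD sinD.
by congr (_ +i* _); rewrite addrC.
Qed.

End PolarForm.

Section KeyPolyRoots.
Variables (R : realType) (n nu : nat) (z : 'I_(2 * n).+1 -> R[i]).
Hypotheses (nu_gt0 : (0 < nu)%N)
  (keyE : key_poly R n nu = \prod_(k < (2 * n).+1) ('X - (z k)%:P)).

Let roots := [seq z k | k <- enum 'I_(2 * n).+1].

Let size_s_short : (size (s_poly R n nu) <= (2 * n).+1)%N.
Proof. by apply: leq_trans (size_s_poly R n nu_gt0) _; lia. Qed.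

Let big_roots (F : R[i] -> {poly R[i]}) :
  \prod_(w <- roots) F w = \prod_(k < (2 * n).+1) F (z k).
Proof. by rewrite big_map big_enum. Qed.

Lemma key_poly_root_norm1 k : z k != 0 -> `|z k| = 1.
Proof.
move=> zk0; have s_neq0_disk u := @s_poly_neq0_disk R n nu u nu_gt0.
apply: (norm_root_add_reciprocal s_neq0_disk (s_poly_conj n nu) size_s_short) => //.
  by move=> u; apply: horner_recip_poly (leqW size_s_short).
rewrite -/(key_poly R n nu) keyE -(big_roots (fun w => 'X - w%:P)).
by rewrite root_prod_XsubC map_f ?mem_enum.
Qed.

Lemma key_poly_root_polar k (r t : R) : 0 < r ->
  z k = ((r * cos t) +i* (r * sin t))%C -> z k = (cos t +i* sin t)%C.
Proof.
move=> r_gt0 zkE.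
have zk0 : z k != 0.
  by rewrite -normr_gt0 zkE norm_polar ?ltW // ltcR.
have := key_poly_root_norm1 zk0; rewrite zkE norm_polar ?ltW // => -[r1].
by rewrite r1 !mul1r.
Qed.

Lemma coef_prod_1subZX_key i : (i <= n)%N ->
  (\prod_(k < (2 * n).+1) (1 - z k *: 'X))`_i = (s_poly R n nu)`_i.
Proof.
move=> i_le; have size_roots : size roots = (2 * n).+1 by rewrite size_map size_enum_ord.
rewrite -(big_roots (fun w => 1 - w *: 'X)) coef_prod_1subZX size_roots.
rewrite (_ : (i <= _)%N); last by lia.
rewrite big_roots -keyE coefD [X in X + _]coef_s_poly_gt ?add0r //; last by lia.
by rewrite coef_recip_poly ?subKn ?(leqW size_s_short) //; lia.
Qed.

Lemma key_poly_power_sums m : (0 < m <= n)%N ->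
  \sum_(k < (2 * n).+1) z k ^+ m = (m == nu)%:R.
Proof.
move=> m_range.
have s_ode i : (i <= n)%N -> ('X * (s_poly R n nu)^`() + s_poly R n nu * 'X^nu)`_i = 0.
  move=> i_le; rewrite s_poly_ode // coefZ coefXn.
  have i_lt : (i < nu * (n %/ nu).+1)%N by rewrite mulnC (leq_ltn_trans i_le) ?ltn_ceil.
  by rewrite ltn_eqF // mulr0.
have Q_s i : (i <= n)%N -> (\prod_(w <- roots) (1 - w *: 'X))`_i = (s_poly R n nu)`_i.
  by rewrite big_roots; apply: coef_prod_1subZX_key.
have := power_sums_of_truncated_ode (coef0_s_poly R n nu_gt0) s_ode Q_s m_range.
by rewrite big_map big_enum.
Qed.

End KeyPolyRoots.

Lemma sum_trigpoly_shift (R : realType) (I : finType) (t : I -> R) n nu a b c :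
  (0 < nu <= n)%N ->
  (forall m, (0 < m <= n)%N ->
     \sum_k (cos (m%:R * t k) +i* sin (m%:R * t k))%C = (m == nu)%:R) ->
  \sum_k trigpoly n a b (c - t k) = a nu * cos (nu%:R * c) + b nu * sin (nu%:R * c).
Proof.
move=> nu_range sum_cis.
have sum_cos m : (0 < m <= n)%N -> \sum_k cos (m%:R * t k) = (m == nu)%:R.
  move=> m_range; have := congr1 (@complex.Re R) (sum_cis m m_range).
  by rewrite (raddf_sum (@complex.Re R : Rcomplex R -> R)); case: (m == nu).
have sum_sin m : (0 < m <= n)%N -> \sum_k sin (m%:R * t k) = 0.
  move=> m_range; have := congr1 (@complex.Im R) (sum_cis m m_range).
  by rewrite (raddf_sum (@complex.Im R : Rcomplex R -> R)); case: (m == nu).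
rewrite /trigpoly exchange_big /= (eq_big_nat _ _ (F2 := fun m =>
  if m == nu then a m * cos (m%:R * c) + b m * sin (m%:R * c) else 0)).
  by rewrite -big_mkcond big_nat1_eq /= ltnS nu_range.
move=> m m_range; rewrite big_split /= -!mulr_sumr.
under eq_bigr do rewrite mulrBr cosB.
under [X in _ + b m * X = _]eq_bigr do rewrite mulrBr sinB.
rewrite !big_split /= sumrN -!mulr_sumr sum_cos // sum_sin //.
by case: eqP; rewrite !(mulr0, mulr1, addr0, subr0).
Qed.

Local Open Scope complex_scope.

Theorem corollary2p2 (R : realType) (n : nat) (a b : nat -> R) (nu : nat)
  (z : 'I_(2 * n).+1 -> R[i]) (t : 'I_(2 * n).+1 -> R) :
  (2 <= n)%N -> (1 <= nu <= n)%N ->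
  key_poly R n nu = \prod_(k < (2 * n).+1) ('X - (z k)%:P) ->
  (forall k, 0 <= t k < 2 * pi /\
     exists r : R, 0 < r /\ z k = (r * cos (t k)) +i* (r * sin (t k))) ->
  a nu = \sum_(k < (2 * n).+1) trigpoly n a b (- t k) /\
  b nu = \sum_(k < (2 * n).+1) trigpoly n a b (pi / (2 * nu%:R) - t k).
Proof.
move=> _ nu_range keyE polar_t; have /andP[nu_gt0 _] := nu_range.
have cisE k : z k = cos (t k) +i* sin (t k).
  have [_ [r [r_gt0 zkE]]] := polar_t k.
  apply: (key_poly_root_polar nu_gt0 keyE r_gt0 zkE).
have sum_cis m : (0 < m <= n)%N ->
    \sum_k (cos (m%:R * t k) +i* sin (m%:R * t k)) = (m == nu)%:R.
  move=> m_range; under eq_bigr do rewrite -cos_sin_exprn -cisE.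
  exact: key_poly_power_sums.
split.
  under [RHS]eq_bigr do rewrite -sub0r.
  by rewrite (sum_trigpoly_shift a b 0 nu_range sum_cis) mulr0 cos0 sin0 mulr1 mulr0 addr0.
rewrite (sum_trigpoly_shift a b _ nu_range sum_cis) (_ : nu%:R * _ = pi / 2).
  by rewrite cos_pihalf sin_pihalf mulr0 mulr1 add0r.
by field; rewrite pnatr_eq0 -lt0n.
Qed.
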